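(* For $O\in\mathbb{R}^2$ let $v$ be a uniform random point in $[0,1]^2$, $g_1(O):=\mathbb{E}(d(O,v))$, and $g_2(O):=\mathbb{E}\left(\min\{d(O,v),\tfrac34 g_1(O)\}\right)$. Then for all $O,O'\in\mathbb{R}^2$, $|g_2(O)-g_2(O')|\le d(O,O')$.
   Context: $d$ is Euclidean distance. *)

From Stdlib Require Import Reals Lra.
From Coquelicot Require Import Coquelicot.
Open Scope R_scope.

Definition d (p q : R * R) : R :=
  sqrt ((fst p - fst q) ^ 2 + (snd p - snd q) ^ 2).

(* Expectation of f(v) for v uniform on [0,1]^2 (Lebesgue measure of the unit
   square is 1), written as an iterated Riemann integral; all integrands used
   below are continuous on the square, so this equals the Lebesgue expectation. *)
Definition E_unit_square (f : R * R -> R) : R :=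
  RInt (fun x => RInt (fun y => f (x, y)) 0 1) 0 1.

Definition g1 (O : R * R) : R := E_unit_square (fun v => d O v).

Definition g2 (O : R * R) : R :=
  E_unit_square (fun v => Rmin (d O v) (3 / 4 * g1 O)).

From Stdlib Require Import Reals Lra Rgeom.
From Coquelicot Require Import Coquelicot.
Open Scope R_scope.

(* For fixed v, both O |-> d(O, v) and the truncation level O |-> 3/4 g1(O)
   are 1-Lipschitz: the first by the triangle inequality, the second because
   g1 is an average of the 1-Lipschitz functions O |-> d(O, v).  A minimum of
   1-Lipschitz functions is 1-Lipschitz, and averaging over the unit square
   preserves this pointwise bound, so g2 is 1-Lipschitz. *)

Lemma d_dist_euc (p q : R * R) :
  d p q = dist_euc (fst p) (snd p) (fst q) (snd q).
Proof. unfold d, dist_euc, Rsqr. f_equal. ring. Qed.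

Lemma d_sym (p q : R * R) : d p q = d q p.
Proof. rewrite !d_dist_euc. apply distance_symm. Qed.

Lemma d_triangle (p q r : R * R) : d p q <= d p r + d r q.
Proof. rewrite !d_dist_euc. apply triangle. Qed.

Lemma d_ge0 (p q : R * R) : 0 <= d p q.
Proof. apply sqrt_pos. Qed.

Lemma Rabs_d_sub_le (p q r : R * R) : Rabs (d p r - d q r) <= d p q.
Proof.
  pose proof (d_triangle p r q). pose proof (d_triangle q r p).
  rewrite (d_sym q p) in *. apply Rabs_le. lra.
Qed.

Lemma d_same_snd (x x' y : R) : d (x, y) (x', y) = Rabs (x - x').
Proof. unfold d; simpl. rewrite <- sqrt_Rsqr_abs. f_equal. unfold Rsqr. ring. Qed.

Lemma d_same_fst (x y y' : R) : d (x, y) (x, y') = Rabs (y - y').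
Proof. unfold d; simpl. rewrite <- sqrt_Rsqr_abs. f_equal. unfold Rsqr. ring. Qed.

Lemma Rabs_Rmin_sub_le (a b a' b' e : R) :
  Rabs (a - a') <= e -> Rabs (b - b') <= e -> Rabs (Rmin a b - Rmin a' b') <= e.
Proof.
  intros Ha Hb. apply Rabs_le_between in Ha. apply Rabs_le_between in Hb.
  unfold Rmin. destruct (Rle_dec a b), (Rle_dec a' b'); apply Rabs_le; lra.
Qed.

Definition lipschitz1 {X : Type} (dist : X -> X -> R) (f : X -> R) : Prop :=
  forall u v, Rabs (f u - f v) <= dist u v.

Lemma lipschitz1_Rmin_cst {X : Type} (dist : X -> X -> R) (f : X -> R) (c : R) :
  (forall u v, 0 <= dist u v) ->
  lipschitz1 dist f -> lipschitz1 dist (fun v => Rmin (f v) c).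
Proof.
  intros Hdist Hf u v. apply Rabs_Rmin_sub_le; [apply Hf |].
  rewrite Rminus_eq_0, Rabs_R0. apply Hdist.
Qed.

Lemma lipschitz1_d_l (O : R * R) : lipschitz1 d (d O).
Proof. intros u v. rewrite (d_sym O u), (d_sym O v). apply Rabs_d_sub_le. Qed.

Lemma ex_RInt_lipschitz1 (f : R -> R) (a b : R) :
  lipschitz1 R_dist f -> ex_RInt f a b.
Proof.
  intros Hf. apply (@ex_RInt_continuous R_CompleteNormedModule).
  intros z _. apply continuity_pt_filterlim.
  intros eps Heps. exists eps. split; [lra |].
  intros x [_ Hx]. eapply Rle_lt_trans; [apply Hf | exact Hx].
Qed.

Lemma RInt_sub_le (f g : R -> R) (a b e : R) :
  a <= b -> ex_RInt f a b -> ex_RInt g a b ->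
  (forall t, a <= t <= b -> Rabs (f t - g t) <= e) ->
  Rabs (RInt f a b - RInt g a b) <= (b - a) * e.
Proof.
  intros Hab Hf Hg Hfg.
  change (RInt f a b - RInt g a b) with (minus (RInt f a b) (RInt g a b)).
  rewrite <- (RInt_minus f g a b Hf Hg).
  apply abs_RInt_le_const; [exact Hab | | exact Hfg].
  exact (ex_RInt_minus f g a b Hf Hg).
Qed.

Lemma RInt_0_1_sub_le (f g : R -> R) (e : R) :
  ex_RInt f 0 1 -> ex_RInt g 0 1 ->
  (forall t, 0 <= t <= 1 -> Rabs (f t - g t) <= e) ->
  Rabs (RInt f 0 1 - RInt g 0 1) <= e.
Proof.
  intros Hf Hg Hfg. replace e with ((1 - 0) * e) by ring.
  apply RInt_sub_le; [lra | assumption ..].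
Qed.

Lemma lipschitz1_section (h : R * R -> R) (x : R) :
  lipschitz1 d h -> lipschitz1 R_dist (fun y => h (x, y)).
Proof. intros Hh y y'. unfold R_dist. rewrite <- (d_same_fst x y y'). apply Hh. Qed.

Lemma lipschitz1_RInt_section (h : R * R -> R) :
  lipschitz1 d h -> lipschitz1 R_dist (fun x => RInt (fun y => h (x, y)) 0 1).
Proof.
  intros Hh x x'. unfold R_dist.
  apply RInt_0_1_sub_le; [apply ex_RInt_lipschitz1, lipschitz1_section; exact Hh .. |].
  intros y _. rewrite <- (d_same_snd x x' y). apply Hh.
Qed.

(* The Lipschitz hypotheses only serve to make every iterated integral exist. *)
Lemma E_unit_square_sub_le (h1 h2 : R * R -> R) (e : R) :
  lipschitz1 d h1 -> lipschitz1 d h2 ->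
  (forall x y, 0 <= x <= 1 -> 0 <= y <= 1 -> Rabs (h1 (x, y) - h2 (x, y)) <= e) ->
  Rabs (E_unit_square h1 - E_unit_square h2) <= e.
Proof.
  intros H1 H2 H12. unfold E_unit_square.
  apply RInt_0_1_sub_le;
    [apply ex_RInt_lipschitz1, lipschitz1_RInt_section; assumption .. |].
  intros x Hx.
  apply RInt_0_1_sub_le; [apply ex_RInt_lipschitz1, lipschitz1_section; assumption .. |].
  intros y Hy. now apply H12.
Qed.

Lemma g1_lipschitz1 : lipschitz1 d g1.
Proof.
  intros O O'. apply E_unit_square_sub_le; try apply lipschitz1_d_l.
  intros x y _ _. apply Rabs_d_sub_le.
Qed.

Theorem lemma20 (O O' : R * R) : Rabs (g2 O - g2 O') <= d O O'.
Proof.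
  apply E_unit_square_sub_le;
    try (apply lipschitz1_Rmin_cst; [apply d_ge0 | apply lipschitz1_d_l]).
  intros x y _ _. apply Rabs_Rmin_sub_le; [apply Rabs_d_sub_le |].
  rewrite <- Rmult_minus_distr_l, Rabs_mult, (Rabs_right (3 / 4)) by lra.
  pose proof (g1_lipschitz1 O O'). pose proof (d_ge0 O O'). lra.
Qed.
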